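(* Let $\models$ be an intersective mixed consequence truth-relation on a finite set $V$ of truth values, with induced consequence relation $\vdash$ in a constant expressive setting. The following are equivalent: (i) $\vdash$ admits a G-disjunction; (ii) every minimal representation of $\models$ is based on a disjunction-compatible list of sets of designated values; (iii) some representation of $\models$ is based on a disjunction-compatible list of sets of designated values.
   Context: $V$ contains distinct $1,0$; sets of designated values: $\mathcal{D}\subseteq V$, $1\in\mathcal{D}$, $0\notin\mathcal{D}$. $\gamma\models_{\mathcal{D}_p,\mathcal{D}_c}\delta$ iff ($\gamma\subseteq\mathcal{D}_p\Rightarrow\delta\cap\mathcal{D}_c\neq\emptyset$). An intersective mixed truth-relation is $\models_{\mathcal{D}_p^1,\mathcal{D}_c^1}\cap\dots\cap\models_{\mathcal{D}_p^K,\mathcal{D}_c^K}$; such a list is a representation, based on the list of sets $\mathcal{D}_p^1,\mathcal{D}_c^1,\dots,\mathcal{D}_p^K,\mathcal{D}_c^K$; it is minimal if $K$ is least possible. A list $\mathcal{D}_1,\dots,\mathcal{D}_n$ is disjunction-compatible if for all $x,y\in V$ there is $z\in V$ such that for every $i$: $z\in\mathcal{D}_i$ iff ($x\in\mathcal{D}_i$ or $y\in\mathcal{D}_i$). Semantics: valuations mapping atoms to $V$, connectives interpreted by fixed truth functions, extended compositionally, every assignment to finitely many distinct atoms realized; constant expressive: every value is the constant value of some formula. $\Gamma\vdash\Delta$ iff $v(\Gamma)\models v(\Delta)$ for all $v$. A G-disjunction is a binary connective $\vee$ (interpreted by some truth function) with, for all $\Gamma,\Delta,A,B$: $\Gamma\vdash\{A\vee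 B\}\cup\Delta$ iff $\Gamma\vdash\{A,B\}\cup\Delta$; and $\Gamma\cup\{A\vee B\}\vdash\Delta$ iff ($\Gamma\cup\{A\}\vdash\Delta$ and $\Gamma\cup\{B\}\vdash\Delta$). *)

From mathcomp Require Import all_boot.
From mathcomp Require Import boolp.
Set Implicit Arguments. Unset Strict Implicit. Unset Printing Implicit Defensive.

Section Defs.
Variable V : finType.

Definition designated (one zero : V) (D : {set V}) : bool :=
  (one \in D) && (zero \notin D).

Definition mixed (Dp Dc : {set V}) (g d : {set V}) : Prop :=
  g \subset Dp -> d :&: Dc != set0.

Definition is_rep (one zero : V) (R : {set V} -> {set V} -> Prop)
    (L : seq ({set V} * {set V})) : Prop :=
  [/\ L != [::],
      (forall p, p \in L -> designated one zero p.1 && designated one zero p.2)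
    & forall g d, R g d <-> (forall p, p \in L -> mixed p.1 p.2 g d)].

Definition is_min_rep (one zero : V) R L : Prop :=
  is_rep one zero R L /\
  forall L', is_rep one zero R L' -> size L <= size L'.

Definition rep_sets (L : seq ({set V} * {set V})) : seq {set V} :=
  flatten [seq [:: p.1; p.2] | p <- L].

Definition disj_compatible (Ds : seq {set V}) : Prop :=
  forall x y : V, exists z : V, forall D, D \in Ds ->
    (z \in D) = (x \in D) || (y \in D).

End Defs.

(* Formulas over atoms nat, a signature C with arities ar, and an extra
   binary connective Or (the candidate disjunction). *)
Inductive form (C : Type) (ar : C -> nat) : Type :=
| Atom of nat
| App (c : C) of ('I_(ar c) -> form ar)
| Or of form ar & form ar.

Arguments Atom {C ar}.
Arguments App {C ar}.
Arguments Or {C ar}.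

Fixpoint eval (V : Type) (C : Type) (ar : C -> nat)
    (I : forall c, ('I_(ar c) -> V) -> V) (dis : V -> V -> V)
    (v : nat -> V) (A : form ar) : V :=
  match A with
  | Atom n => v n
  | App c f => I c (fun i => eval I dis v (f i))
  | Or A B => dis (eval I dis v A) (eval I dis v B)
  end.

Fixpoint orfree (C : Type) (ar : C -> nat) (A : form ar) : Prop :=
  match A with
  | Atom _ => True
  | App c f => forall i, orfree (f i)
  | Or _ _ => False
  end.

Definition const_expressive (V : Type) (C : Type) (ar : C -> nat)
    (I : forall c, ('I_(ar c) -> V) -> V) : Prop :=
  forall x : V, exists A : form ar,
    orfree A /\ forall dis v, eval I dis v A = x.

Definition img (V : finType) (C : Type) (ar : C -> nat)
    (I : forall c, ('I_(ar c) -> V) -> V) (dis : V -> V -> V)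
    (v : nat -> V) (G : form ar -> Prop) : {set V} :=
  [set x | `[< exists A, G A /\ eval I dis v A = x >]].

Definition conseq (V : finType) (C : Type) (ar : C -> nat)
    (I : forall c, ('I_(ar c) -> V) -> V) (dis : V -> V -> V)
    (R : {set V} -> {set V} -> Prop) (G D : form ar -> Prop) : Prop :=
  forall v : nat -> V, R (img I dis v G) (img I dis v D).

Definition addf (C : Type) (ar : C -> nat) (A : form ar) (G : form ar -> Prop) :=
  fun X => X = A \/ G X.

Definition G_disjunction (V : finType) (C : Type) (ar : C -> nat)
    (I : forall c, ('I_(ar c) -> V) -> V) (R : {set V} -> {set V} -> Prop)
    (dis : V -> V -> V) : Prop :=
  forall (G D : form ar -> Prop) (A B : form ar),
    (conseq I dis R G (addf (Or A B) D) <->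
     conseq I dis R G (addf A (addf B D))) /\
    (conseq I dis R (addf (Or A B) G) D <->
     (conseq I dis R (addf A G) D /\ conseq I dis R (addf B G) D)).

From mathcomp Require Import all_boot.
From mathcomp Require Import boolp.
Set Implicit Arguments. Unset Strict Implicit. Unset Printing Implicit Defensive.

(* Call j a disjunction on values of R when adding j x y to a conclusion
   amounts to adding x and y, and adding it to the premises amounts to adding
   x and, separately, y.  As every value is the value of a constant formula,
   (i) says exactly that the interpretation of the connective is such a j.
   Whether a set satisfies a mixed relation only depends on which designated
   sets its elements lie in, so witnesses of disjunction-compatibility form
   such a j.  Conversely, in a minimal representation no pair (Dp, Dc) is
   implied by another pair with larger Dp and smaller Dc; hence "w \notin Dp"
   and "d meets Dc" (for d containing ~: Dc) are expressed by the relation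
   itself, and the defining equivalences of j make j x y a compatibility
   witness for x and y. *)

Section MixedRelations.
Variable V : finType.
Implicit Types (x y z : V) (g d Dp Dc : {set V}) (L : seq ({set V} * {set V})).

Definition intersective L g d := forall p, p \in L -> mixed p.1 p.2 g d.

Definition value_disjunction (R : {set V} -> {set V} -> Prop) (j : V -> V -> V) :=
  forall x y g d,
    (R g (j x y |: d) <-> R g (x |: (y |: d))) /\
    (R (j x y |: g) d <-> R (x |: g) d /\ R (y |: g) d).

Lemma setU1I_neq0 z d Dc :
  ((z |: d) :&: Dc != set0) = (z \in Dc) || (d :&: Dc != set0).
Proof.
apply/set0Pn/orP => [[w]|[zD|/set0Pn[w]]]; rewrite ?inE.
- case/andP=> /orP[/eqP->|wd] wD; [by left | right].
  by apply/set0Pn; exists w; rewrite inE wd.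
- by exists z; rewrite !inE eqxx.
- by case/andP=> wd wD; exists w; rewrite !inE wd wD orbT.
Qed.

Lemma mixed_setU1r Dp Dc g d x y z :
  (z \in Dc) = (x \in Dc) || (y \in Dc) ->
  mixed Dp Dc g (z |: d) <-> mixed Dp Dc g (x |: (y |: d)).
Proof. by move=> zE; rewrite /mixed !setU1I_neq0 zE orbA. Qed.

Lemma mixed_setU1l Dp Dc g d x y z :
  (z \in Dp) = (x \in Dp) || (y \in Dp) ->
  mixed Dp Dc (z |: g) d <-> mixed Dp Dc (x |: g) d /\ mixed Dp Dc (y |: g) d.
Proof.
rewrite /mixed !subUset !sub1set => ->.
by case: (x \in Dp); case: (y \in Dp); case: (g \subset Dp); intuition.
Qed.

Lemma mem_rep_sets L D :
  D \in rep_sets L <-> exists2 p, p \in L & D = p.1 \/ D = p.2.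
Proof.
split=> [/flatten_mapP[p pL]|[p pL [->|->]]].
- by rewrite !inE => /orP[]/eqP->; exists p; auto.
- by apply/flatten_mapP; exists p; rewrite ?inE ?eqxx ?orbT.
- by apply/flatten_mapP; exists p; rewrite ?inE ?eqxx ?orbT.
Qed.

Lemma disj_compatible_fun (Ds : seq {set V}) :
  disj_compatible Ds ->
  exists j : V -> V -> V, forall x y D, D \in Ds ->
    (j x y \in D) = (x \in D) || (y \in D).
Proof.
by move=> hDs; exists (fun x y => sval (cid (hDs x y))) => x y; case: cid.
Qed.

Lemma intersective_value_disjunction L (j : V -> V -> V) :
  (forall x y D, D \in rep_sets L -> (j x y \in D) = (x \in D) || (y \in D)) ->
  value_disjunction (intersective L) j.
Proof.
move=> hj x y g d.
have j1 p : p \in L -> (j x y \in p.1) = (x \in p.1) || (y \in p.1).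
  by move=> pL; apply: hj; apply/mem_rep_sets; exists p; auto.
have j2 p : p \in L -> (j x y \in p.2) = (x \in p.2) || (y \in p.2).
  by move=> pL; apply: hj; apply/mem_rep_sets; exists p; auto.
split; first by split=> h p pL; apply/(mixed_setU1r _ _ _ (j2 p pL))/h.
split.
- by move=> h; split=> p pL; have /(mixed_setU1l _ _ _ (j1 p pL))[] := h p pL.
- by case=> hx hy p pL; apply/(mixed_setU1l _ _ _ (j1 p pL)); split; auto.
Qed.

Lemma rep_value_disjunction one zero R L (j : V -> V -> V) :
  is_rep one zero R L ->
  (forall x y D, D \in rep_sets L -> (j x y \in D) = (x \in D) || (y \in D)) ->
  value_disjunction R j.
Proof.
case=> _ _ HR /intersective_value_disjunction hj x y g d.
by rewrite !HR; apply: hj.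
Qed.

Lemma min_rep_exists one zero R L :
  is_rep one zero R L -> exists L', is_min_rep one zero R L'.
Proof.
move=> repL.
have hex : exists n, `[< exists L', is_rep one zero R L' /\ size L' = n >].
  by exists (size L); apply/asboolP; exists L.
case: (ex_minnP hex) => _ /asboolP[L' [repL' <-]] Lmin.
by exists L'; split=> // L'' repL''; apply: Lmin; apply/asboolP; exists L''.
Qed.

Section MinimalRepresentation.
Variables (one zero : V) (R : {set V} -> {set V} -> Prop).
Variable L : seq ({set V} * {set V}).
Hypothesis Lmin : is_min_rep one zero R L.

Lemma min_rep_irredundant p q : p \in L -> q \in L ->
  p.1 \subset q.1 -> q.2 \subset p.2 -> q = p.
Proof.
have [[_ Ldes HR] Lsize] := Lmin.
move=> pL qL sub1 sub2; apply/eqP/negPn/negP => qp.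
have memL r : r \in L -> r = p \/ r \in rem p L.
  by rewrite (perm_mem (perm_to_rem pL)) inE => /predU1P.
have qL' : q \in rem p L by case: (memL q qL) => // /eqP; rewrite (negbTE qp).
have rep' : is_rep one zero R (rem p L).
  split=> [|r /mem_rem /Ldes //|g d].
  - by apply/eqP => L'0; rewrite L'0 in qL'.
  rewrite HR; split=> [h r /mem_rem /h //|h r /memL[->|/h //] gp].
  have /set0Pn[w] := h q qL' (subset_trans gp sub1).
  by rewrite inE => /andP[wd wq]; apply/set0Pn; exists w; rewrite inE wd (subsetP sub2).
have := Lsize _ rep'; rewrite size_rem // leqNgt ltn_predL -has_predT.
by case/negP; apply/hasP; exists p.
Qed.

Lemma min_rep_notin_premise p w : p \in L ->
  R (w |: p.1) (~: p.2) <-> w \notin p.1.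
Proof.
have [[_ _ HR] _] := Lmin; move=> pL; rewrite HR; split.
- move=> h; apply/negP => wp.
  have := h p pL; rewrite /mixed subUset sub1set wp subxx => /(_ isT) /set0Pn[u].
  by rewrite !inE => /andP[/negP].
- move=> wp q qL; rewrite /mixed subUset sub1set => /andP[wq sub1].
  have [sub2|/subsetPn[u uq up]] := boolP (q.2 \subset p.2).
    by move: wq; rewrite (min_rep_irredundant pL qL sub1 sub2) (negbTE wp).
  by apply/set0Pn; exists u; rewrite !inE uq up.
Qed.

Lemma min_rep_meets_conclusion p d : p \in L -> ~: p.2 \subset d ->
  R p.1 d <-> d :&: p.2 != set0.
Proof.
have [[_ _ HR] _] := Lmin; move=> pL subd; rewrite HR; split=> [h|dp].
  exact: h p pL (subxx _).
move=> q qL sub1; have [sub2|/subsetPn[u uq up]] := boolP (q.2 \subset p.2).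
  by rewrite (min_rep_irredundant pL qL sub1 sub2).
by apply/set0Pn; exists u; rewrite inE uq (subsetP subd) // inE.
Qed.

Lemma min_rep_disj_compatible (j : V -> V -> V) :
  value_disjunction R j -> disj_compatible (rep_sets L).
Proof.
move=> hj x y; exists (j x y) => D /mem_rep_sets[p pL [->|->]].
- have [_ E] := hj x y p.1 (~: p.2).
  rewrite !min_rep_notin_premise // in E.
  by apply/negb_inj; rewrite negb_or; apply/idP/andP => /E.
- have [E _] := hj x y p.1 (~: p.2).
  rewrite (min_rep_meets_conclusion pL (subsetU1 _ _)) in E.
  rewrite (min_rep_meets_conclusion pL (subset_trans (subsetU1 y _) (subsetU1 x _))) in E.
  rewrite !setU1I_neq0 setIC setICr eqxx !orbF in E.
  by apply/idP/idP => /E.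
Qed.

End MinimalRepresentation.

End MixedRelations.

Section Formulas.
Variables (V : finType) (C : Type) (ar : C -> nat).
Variable I : forall c, ('I_(ar c) -> V) -> V.
Variable R : {set V} -> {set V} -> Prop.

Definition const_forms (s : {set V}) : form ar -> Prop :=
  fun A => exists2 u, u \in s & forall dis v, eval I dis v A = u.

Lemma img_addf dis v A G :
  img I dis v (addf A G) = eval I dis v A |: img I dis v G.
Proof.
apply/setP => x; rewrite in_setU1 !inE; apply/asboolP/orP.
- case=> B [[->|GB] <-]; first by left.
  by right; apply/asboolP; exists B.
- case=> [/eqP->|/asboolP[B [GB <-]]]; first by exists A; split => //; left.
  by exists B; split => //; right.
Qed.

Lemma img_const_forms dis v s :
  const_expressive I -> img I dis v (const_forms s) = s.
Proof.
move=> hCE; apply/setP => u; rewrite inE; apply/asboolP/idP.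
- by case=> A [[w ws hA] <-]; rewrite hA.
- by move=> us; have [A [_ hA]] := hCE u; exists A; split => //; exists u.
Qed.

Lemma conseq_img_const dis (v0 : nat -> V) G D g d :
  (forall v, img I dis v G = g) -> (forall v, img I dis v D = d) ->
  conseq I dis R G D <-> R g d.
Proof. by move=> eG eD; split=> [/(_ v0)|h v]; rewrite ?eG ?eD. Qed.

Lemma value_disjunction_G_disjunction dis :
  value_disjunction R dis -> G_disjunction I R dis.
Proof.
move=> hdis G D A B.
have hv v := hdis (eval I dis v A) (eval I dis v B) (img I dis v G) (img I dis v D).
split; rewrite /conseq.
- by split=> h v; move: (h v); rewrite !img_addf /=; case: (hv v) => -> _.
- split=> [h|[hA hB] v].
    by split=> v; move: (h v); rewrite !img_addf /=; case: (hv v) => _ -> [].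
  by move: (hA v) (hB v); rewrite !img_addf /=; case: (hv v) => _ -> ? ?; split.
Qed.

Lemma G_disjunction_value_disjunction dis :
  const_expressive I -> G_disjunction I R dis -> value_disjunction R dis.
Proof.
move=> hCE hG x y g d.
have [Ax [_ hAx]] := hCE x; have [Ay [_ hAy]] := hCE y.
have [hr hl] := hG (const_forms g) (const_forms d) Ax Ay.
have imgC s v : img I dis v (const_forms s) = s by exact: img_const_forms.
have cE := @conseq_img_const dis (fun=> x).
have eOr s v : img I dis v (addf (Or Ax Ay) (const_forms s)) = dis x y |: s.
  by rewrite img_addf /= hAx hAy imgC.
have eX s v : img I dis v (addf Ax (const_forms s)) = x |: s.
  by rewrite img_addf hAx imgC.
have eY s v : img I dis v (addf Ay (const_forms s)) = y |: s.
  by rewrite img_addf hAy imgC.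
have eXY v : img I dis v (addf Ax (addf Ay (const_forms d))) = x |: (y |: d).
  by rewrite !img_addf hAx hAy imgC.
rewrite (cE _ _ _ _ (imgC g) (eOr d)) (cE _ _ _ _ (imgC g) eXY) in hr.
rewrite (cE _ _ _ _ (eOr g) (imgC d)) (cE _ _ _ _ (eX g) (imgC d)) in hl.
by rewrite (cE _ _ _ _ (eY g) (imgC d)) in hl.
Qed.

End Formulas.

Theorem theorem7p2 (V : finType) (one zero : V) (C : Type) (ar : C -> nat)
    (I : forall c, ('I_(ar c) -> V) -> V) (R : {set V} -> {set V} -> Prop) :
  one != zero ->
  (exists L, is_rep one zero R L) ->
  const_expressive I ->
  [/\ ((exists dis : V -> V -> V, G_disjunction I R dis) ->
        forall L, is_min_rep one zero R L -> disj_compatible (rep_sets L)),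
      ((forall L, is_min_rep one zero R L -> disj_compatible (rep_sets L)) ->
        exists L, is_rep one zero R L /\ disj_compatible (rep_sets L))
    & ((exists L, is_rep one zero R L /\ disj_compatible (rep_sets L)) ->
        exists dis : V -> V -> V, G_disjunction I R dis)].
Proof.
move=> _ [L0 repL0] hCE; split.
- case=> dis /(G_disjunction_value_disjunction hCE) hdis L Lmin.
  exact: (min_rep_disj_compatible Lmin hdis).
- move=> hmin; have [L Lmin] := min_rep_exists repL0.
  by exists L; split; [case: Lmin | exact: hmin].
- case=> L [repL /disj_compatible_fun[j hj]]; exists j.
  exact/value_disjunction_G_disjunction/(rep_value_disjunction repL hj).
Qed.
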